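(* For $n\ge2$, there is no finite simple graph $G$ with independence number $n$ whose reduced independence polynomial $P=P_G$ satisfies $\frac{5}{2}P(z)+1=T_n\!\left(\frac{5}{2}z+1\right)$ for all $z$.
   Context: For a finite simple graph $G$, the independence polynomial is $I_G(z)=\sum_{i=0}^{\alpha} a_i z^i$, where $a_i$ is the number of sets of $i$ pairwise non-adjacent vertices and the independence number $\alpha$ is the largest such $i$; the reduced independence polynomial is $P_G=I_G-1$. $T_n$ is the Chebyshev polynomial of the first kind of degree $n$: $T_0=1$, $T_1(z)=z$, $T_n(z)=2zT_{n-1}(z)-T_{n-2}(z)$. *)

From HB Require Import structures.
From mathcomp Require Import all_boot all_order all_algebra.
Set Implicit Arguments. Unset Strict Implicit. Unset Printing Implicit Defensive.
Import Order.TTheory GRing.Theory Num.Theory.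
Local Open Scope ring_scope.

Definition simple_graph (T : finType) (e : rel T) : Prop :=
  symmetric e /\ irreflexive e.

Definition independent (T : finType) (e : rel T) (S : {set T}) : bool :=
  [forall x in S, forall y in S, ~~ e x y].

Definition indep_count (T : finType) (e : rel T) (i : nat) : nat :=
  #|[set S : {set T} | independent e S && (#|S| == i)]|.

Definition indep_number (T : finType) (e : rel T) : nat :=
  \max_(S : {set T} | independent e S) #|S|.

Definition indep_poly (T : finType) (e : rel T) : {poly rat} :=
  \sum_(i < (indep_number e).+1) (indep_count e i)%:R *: 'X^i.

Definition red_indep_poly (T : finType) (e : rel T) : {poly rat} :=
  indep_poly e - 1.

Fixpoint cheb_pair (n : nat) : {poly rat} * {poly rat} :=
  match n with
  | 0%N => (1, 'X)
  | m.+1 => let p := cheb_pair m in (p.2, 2%:R *: 'X * p.2 - p.1)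
  end.

Definition chebT (n : nat) : {poly rat} := (cheb_pair n).1.

From HB Require Import structures.
From mathcomp Require Import all_boot all_order all_algebra.
From mathcomp Require Import ring lra.
Import Order.TTheory GRing.Theory Num.Theory.
Set Implicit Arguments. Unset Strict Implicit.
Local Open Scope ring_scope.

(* Comparing the coefficients of z, z^2 and z^3 in c P(z) + 1 = T_n(c z + 1)
   forces a_1 = N := n^2, a_2 = c N(N-1)/6 and a_3 = c^2 N(N-1)(N-4)/90, and
   a_1 = N is the number of vertices.  A dependent 3-set is a dependent pair
   plus a third vertex, so C(N,3) - a_3 <= (C(N,2) - a_2)(N-2); for c = 5/2 the
   forced values violate this by N(N-1)(N+8)/72. *)

Lemma leq_card_bigcup (I T : finType) (P : pred I) (F : I -> {set T}) :
  (#|\bigcup_(i | P i) F i| <= \sum_(i | P i) #|F i|)%N.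
Proof.
apply: (big_ind2 (fun (A : {set T}) m => #|A| <= m)%N) => [|A m B k leAm leBk|//].
  by rewrite cards0.
exact: leq_trans (leq_card_setU A B) (leq_add leAm leBk).
Qed.

Lemma poly_horner_inj (R : numDomainType) (p q : {poly R}) :
  (forall x, p.[x] = q.[x]) -> p = q.
Proof.
move=> eq_pq; apply/eqP; rewrite -subr_eq0; apply/eqP.
apply: (@roots_geq_poly_eq0 _ _ [seq i%:R | i <- iota 0 (size (p - q))]).
- by apply/allP => x _; rewrite /root hornerD hornerN eq_pq subrr.
- by rewrite map_inj_uniq ?iota_uniq // => i j /eqP; rewrite eqr_nat => /eqP.
- by rewrite size_map size_iota.
Qed.

Lemma natr_bin2 (R : numFieldType) N :
  'C(N, 2)%:R = N%:R * (N%:R - 1) / 2 :> R.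
Proof.
elim: N => [|N IHN]; first by rewrite !mul0r.
by rewrite binS bin1 natrD IHN -natr1; field.
Qed.

Lemma natr_bin3 (R : numFieldType) N :
  'C(N, 3)%:R = N%:R * (N%:R - 1) * (N%:R - 2) / 6 :> R.
Proof.
elim: N => [|N IHN]; first by rewrite !mul0r.
by rewrite binS natrD IHN natr_bin2 -natr1; field.
Qed.

Section IndependentSets.

Variables (T : finType) (e : rel T).

Definition dependent_sets (k : nat) : {set {set T}} :=
  [set S : {set T} | ~~ independent e S & #|S| == k].

Lemma not_independentP (S : {set T}) :
  reflect (exists x y, [/\ x \in S, y \in S & e x y]) (~~ independent e S).
Proof.
apply: (iffP forall_inPn) => [[x xS /forall_inPn [y yS /negPn exy]]|[x [y [xS yS exy]]]].
  by exists x, y.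
by exists x => //; apply/forall_inPn; exists y; rewrite ?exy.
Qed.

Lemma indep_count_eq0 k : (indep_number e < k)%N -> indep_count e k = 0%N.
Proof.
move=> ltk; apply/eqP; rewrite cards_eq0; apply/eqP/setP => S; rewrite !inE.
apply/negbTE/andP => -[indS /eqP cardS].
have := @leq_bigmax_cond _ _ (fun S : {set T} => #|S|) _ indS.
by rewrite cardS leqNgt ltk.
Qed.

Lemma coef_indep_poly k : (indep_poly e)`_k = (indep_count e k)%:R.
Proof.
rewrite /indep_poly -(poly_def _ (fun i => (indep_count e i)%:R)) coef_poly.
by case: ltnP => // /indep_count_eq0 ->.
Qed.

Lemma indep_count_add_dependent k :
  (indep_count e k + #|dependent_sets k| = 'C(#|T|, k))%N.
Proof.
rewrite -card_draws -(cardsID [set S : {set T} | independent e S]).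
by congr (_ + _)%N; apply: eq_card => S; rewrite !inE andbC.
Qed.

Hypothesis irr : irreflexive e.

Lemma indep_count1 : indep_count e 1 = #|T|.
Proof.
rewrite /indep_count -[RHS]cardsT -[RHS](card_imset _ set1_inj).
apply: eq_card => S; rewrite !inE; apply/andP/imsetP.
  by case=> _ /cards1P [x ->]; exists x.
case=> x _ ->; rewrite cards1; split=> //.
by apply/forall_inP => y /set1P -> ; apply/forall_inP => z /set1P ->; rewrite irr.
Qed.

Lemma dependent_sets3_sub :
  dependent_sets 3 \subset
  \bigcup_(p in dependent_sets 2) [set z |: p | z in ~: p].
Proof.
apply/subsetP => S; rewrite inE => /andP [].
move=> /not_independentP [x [y [xS yS exy]]] /eqP cardS.
have neq_xy : x != y by apply: contraTneq exy => ->; rewrite irr.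
set p := [set x; y].
have cardp : #|p| = 2 by rewrite cards2 neq_xy.
have pS : p \subset S by rewrite subUset !sub1set xS yS.
have [z zSp] : exists z, z \in S :\: p.
  by apply/set0Pn; rewrite -card_gt0 cardsD (setIidPr pS) cardS cardp.
move: zSp; rewrite inE => /andP [zNp zS].
apply/bigcupP; exists p.
  rewrite inE cardp eqxx andbT; apply/not_independentP.
  by exists x, y; rewrite !inE !eqxx orbT.
apply/imsetP; exists z; first by rewrite inE.
apply/eqP; rewrite eq_sym eqEcard subUset sub1set zS pS /=.
by rewrite cardsU1 zNp cardp cardS.
Qed.

Lemma card_dependent_sets3 :
  (#|dependent_sets 3| <= #|dependent_sets 2| * (#|T| - 2))%N.
Proof.
apply: leq_trans (subset_leq_card dependent_sets3_sub) _.
apply: leq_trans (leq_card_bigcup _ _) _.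
rewrite -sum_nat_const; apply: leq_sum => p; rewrite inE => /andP [_ /eqP cardp].
by apply: leq_trans (leq_imset_card _ _) _; rewrite cardsCs setCK cardp.
Qed.

Lemma dependent_count3_le (R : numDomainType) : (2 <= #|T|)%N ->
  'C(#|T|, 3)%:R - (indep_count e 3)%:R
    <= ('C(#|T|, 2)%:R - (indep_count e 2)%:R) * (#|T|%:R - 2) :> R.
Proof.
move=> le2T; rewrite -!indep_count_add_dependent !natrD.
rewrite ![(indep_count e _)%:R + _]addrC !addrK -natrB // -natrM ler_nat.
exact: card_dependent_sets3.
Qed.

End IndependentSets.

Section ChebyshevAffine.

Variable c : rat.

Local Notation q n := (chebT n \Po (c *: 'X + 1)).
Local Notation N n := (n%:R ^+ 2 : rat).
Local Notation low_coefs n :=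
  [/\ (q n)`_0 = 1, (q n)`_1 = c * N n,
      (q n)`_2 = c ^+ 2 * (N n * (N n - 1) / 6)
    & (q n)`_3 = c ^+ 3 * (N n * (N n - 1) * (N n - 4) / 90)].

Lemma chebT_affine_rec m :
  q m.+2 = (2 * c) *: ('X * q m.+1) + 2 *: q m.+1 - q m.
Proof.
rewrite [chebT m.+2]/chebT /= -/(chebT m.+1) -/(chebT m).
rewrite comp_polyB comp_polyM comp_polyZ comp_polyX.
by rewrite -!scalerAl mulrDl mul1r -scalerAl scalerDr scalerA.
Qed.

Lemma coef_chebT_affine n : low_coefs n.
Proof.
suff /proj1 : low_coefs n /\ low_coefs n.+1 by [].
elim: n => [|n [[a0 a1 a2 a3] [b0 b1 b2 b3]]].
  by rewrite /chebT /= comp_polyC comp_polyX !coefE /=; split; split; field.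
split; first by split.
rewrite chebT_affine_rec !coefB !coefD !coefZ !coefXM /= a0 a1 a2 a3 b0 b1 b2 b3.
by rewrite -!natr1; split; field.
Qed.

End ChebyshevAffine.

Lemma indep_counts_of_chebT (T : finType) (e : rel T) (c : rat) n :
  (forall z, c * (red_indep_poly e).[z] + 1 = (chebT n).[c * z + 1]) ->
  c != 0 ->
  [/\ (indep_count e 1)%:R = n%:R ^+ 2 :> rat,
      (indep_count e 2)%:R = c * (n%:R ^+ 2 * (n%:R ^+ 2 - 1) / 6)
    & (indep_count e 3)%:R =
        c ^+ 2 * (n%:R ^+ 2 * (n%:R ^+ 2 - 1) * (n%:R ^+ 2 - 4) / 90)].
Proof.
move=> eq_cheb c_neq0.
have eq_poly : c *: red_indep_poly e + 1 = chebT n \Po (c *: 'X + 1).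
  apply: poly_horner_inj => z; rewrite horner_comp.
  have -> : (c *: 'X + 1).[z] = c * z + 1 by rewrite !hornerE.
  by rewrite -eq_cheb !hornerE.
have coef_cheb k : (0 < k)%N ->
    c * (indep_count e k)%:R = (chebT n \Po (c *: 'X + 1))`_k.
  case: k => // k _; rewrite -eq_poly coefD coefZ coefC /red_indep_poly.
  by rewrite coefB coef_indep_poly coefC addr0 subr0.
have [_ q1 q2 q3] := coef_chebT_affine c n.
by split; apply: (mulfI c_neq0); rewrite coef_cheb // ?q1 ?q2 ?q3 //; ring.
Qed.

Theorem lemma3p8 (n : nat) : (2 <= n)%N ->
  ~ exists (T : finType) (e : rel T),
      [/\ simple_graph e,
          indep_number e = n &
          forall z : rat,
            (5%:R / 2%:R) * (red_indep_poly e).[z] + 1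
            = (chebT n).[(5%:R / 2%:R) * z + 1]].
Proof.
move=> le2n [T [e [[_ irr] _ eq_cheb]]].
have [a1 a2 a3] := indep_counts_of_chebT eq_cheb isT.
have cardT : #|T| = (n ^ 2)%N.
  by apply/eqP; rewrite -(eqr_nat rat) -(indep_count1 irr) a1 natrX.
have le2T : (2 <= #|T|)%N.
  by rewrite cardT -mulnn (leq_trans le2n) ?leq_pmulr // ltnW.
have := dependent_count3_le irr rat le2T.
have : 1 < #|T|%:R :> rat by rewrite (ltr_nat _ 1).
rewrite a2 a3 natr_bin2 natr_bin3 cardT natrX.
move: (n%:R ^+ 2) => N gt1N; apply/negP; rewrite -ltNge -subr_gt0.
rewrite (_ : _ - _ = N * (N - 1) * (N + 8) / 72); last by field.
by apply: divr_gt0 => //; apply: mulr_gt0; [apply: mulr_gt0 |]; lra.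
Qed.
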